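(* The truncated welfare-based dynamic posted-price (TWDPP) mechanism is ex post incentive compatible for myopic bidders and dominant-strategy incentive compatible for myopic miners.
   Context: Dynamic posted-price setting: at each time step a block with $m$ slots is produced by an active miner; $n$ bidders with private values $v_i\ge0$ submit bids $b_i$, each participating once. Given the current posted price $q>0$, $M(q)=\{i:b_i\ge q\}$; a block is $B\subseteq M(q)$ with $|B|\le m$; each $i\in B$ gets a slot and pays $q$. The TWDPP mechanism uses the random maximal (RM) allocation rule — $B$ is chosen uniformly at random among subsets of $M(q)$ of size $\min\{m,|M(q)|\}$ — and the update rule $T_{TW}(q,B)=\alpha\frac1m\sum_{i\in B}\min\{b_i,(1+\delta)q\}+(1-\alpha)q$ if $|B|<m$, and $\alpha(1+\delta)q+(1-\alpha)q$ if $|B|=m$, with $\alpha\in(0,1)$, $\delta\in(0,\infty)$. A myopic bidder's utility is $v_i-q$ if included and $0$ otherwise (in expectation over allocation randomness); ex post IC for myopic bidders means that, when the miner follows the RM rule, bidding $b_i=v_i$ weakly dominates every other bid for all bids of others. A myopic miner's utility is the total payment $q|B|$ in the current block; DSIC for myopic miners means following the RM rule is a weakly dominant, utility-maximizing strategy for the miner for all bids. *)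

From HB Require Import structures.
From mathcomp Require Import all_boot all_order all_algebra.
Set Implicit Arguments. Unset Strict Implicit. Unset Printing Implicit Defensive.
Import Order.TTheory GRing.Theory Num.Theory.
Local Open Scope ring_scope.

Section PostedPrice.
Variables (R : realFieldType) (n : nat).

Definition bids := 'I_n -> R.

Definition Mset (q : R) (b : bids) : {set 'I_n} := [set i | q <= b i].

Definition feasible_block (m : nat) (q : R) (b : bids) (B : {set 'I_n}) : bool :=
  (B \subset Mset q b) && (#|B| <= m)%N.

(* A posted-price mechanism: a (randomized) allocation rule, given as the
   support of a UNIFORM distribution over blocks, and a price update rule. *)
Record ppmech := PPMech {
  alloc : R -> bids -> {set {set 'I_n}};
  update : R -> bids -> {set 'I_n} -> R }.

Definition RM_alloc (m : nat) (q : R) (b : bids) : {set {set 'I_n}} :=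
  [set B : {set 'I_n} | (B \subset Mset q b) && (#|B| == minn m #|Mset q b|)].

Definition TW_update (m : nat) (alpha delta : R) (q : R) (b : bids)
    (B : {set 'I_n}) : R :=
  if (#|B| < m)%N then
    alpha * (m%:R)^-1 * (\sum_(i in B) Num.min (b i) ((1 + delta) * q))
      + (1 - alpha) * q
  else alpha * ((1 + delta) * q) + (1 - alpha) * q.

Definition TWDPP (m : nat) (alpha delta : R) : ppmech :=
  PPMech (RM_alloc m) (TW_update m alpha delta).

Definition uexp (S : {set {set 'I_n}}) (f : {set 'I_n} -> R) : R :=
  (\sum_(B in S) f B) / #|S|%:R.

Definition set_bid (b : bids) (i : 'I_n) (x : R) : bids :=
  fun j => if j == i then x else b j.

Definition bidder_utility (M : ppmech) (q : R) (b : bids) (i : 'I_n) (v : R) : R :=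
  uexp (alloc M q b) (fun B => if i \in B then v - q else 0).

Definition miner_utility_rule (M : ppmech) (q : R) (b : bids) : R :=
  uexp (alloc M q b) (fun B => q * #|B|%:R).

Definition expost_IC_myopic_bidders (M : ppmech) : Prop :=
  forall (q : R), 0 < q ->
  forall (b : bids) (i : 'I_n) (v x : R), 0 <= v ->
    bidder_utility M q (set_bid b i x) i v <= bidder_utility M q (set_bid b i v) i v.

Definition DSIC_myopic_miner (m : nat) (M : ppmech) : Prop :=
  forall (q : R), 0 < q ->
  forall (b : bids) (B : {set 'I_n}), feasible_block m q b B ->
    q * #|B|%:R <= miner_utility_rule M q b.

End PostedPrice.

From HB Require Import structures.
From mathcomp Require Import all_boot all_order all_algebra.
Set Implicit Arguments. Unset Strict Implicit. Unset Printing Implicit Defensive.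
Import Order.TTheory GRing.Theory Num.Theory.
Local Open Scope ring_scope.

(* The random maximal rule depends on the bids only through M(q) and only
   draws blocks inside M(q); hence a bid merely decides whether its bidder is
   eligible, and eligibility is worth an expected utility of the sign of
   v - q. Every block it draws has the largest feasible size min(m, |M(q)|),
   so no feasible block pays the miner more. *)

Section UniformExpectation.
Variables (R : realFieldType) (n : nat).
Implicit Types (S : {set {set 'I_n}}) (f : {set 'I_n} -> R).

Lemma uexp_ge0 S f : {in S, forall B, 0 <= f B} -> 0 <= uexp S f.
Proof. by move=> f_ge0; rewrite divr_ge0 // sumr_ge0. Qed.

Lemma uexp_le0 S f : {in S, forall B, f B <= 0} -> uexp S f <= 0.
Proof. by move=> f_le0; rewrite mulr_le0_ge0 ?invr_ge0 // sumr_le0. Qed.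

Lemma uexp_eq0 S f : {in S, forall B, f B = 0} -> uexp S f = 0.
Proof. by move=> f_eq0; rewrite /uexp big1 ?mul0r. Qed.

Lemma uexp_cst S f c : S != set0 -> {in S, forall B, f B = c} -> uexp S f = c.
Proof.
move=> S_neq0 f_eqc; rewrite /uexp (eq_bigr (fun _ => c)) // sumr_const.
by rewrite -[c *+ _]mulr_natr mulfK // pnatr_eq0 -lt0n card_gt0.
Qed.

Lemma bidder_utility_ge0 (M : ppmech R n) q b i v :
  q <= v -> 0 <= bidder_utility M q b i v.
Proof. by move=> qv; apply: uexp_ge0 => B _; case: ifP; rewrite ?subr_ge0. Qed.

Lemma bidder_utility_le0 (M : ppmech R n) q b i v :
  v <= q -> bidder_utility M q b i v <= 0.
Proof. by move=> vq; apply: uexp_le0 => B _; case: ifP; rewrite ?subr_le0. Qed.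

End UniformExpectation.

Section RandomMaximal.
Variables (R : realFieldType) (n m : nat).
Implicit Types (q x y : R) (b : bids R n) (B : {set 'I_n}).

Lemma RM_alloc_sub q b B : B \in RM_alloc m q b -> B \subset Mset q b.
Proof. by rewrite inE => /andP[]. Qed.

Lemma card_RM_alloc q b B :
  B \in RM_alloc m q b -> #|B| = minn m #|Mset q b|.
Proof. by rewrite inE => /andP[_ /eqP]. Qed.

Lemma RM_alloc_neq0 q b : RM_alloc m q b != set0.
Proof. by rewrite -card_gt0 cards_draws bin_gt0 geq_minr. Qed.

Lemma feasible_block_card q b B :
  feasible_block m q b B -> (#|B| <= minn m #|Mset q b|)%N.
Proof. by case/andP=> /subset_leq_card B_le_M B_le_m; rewrite leq_min B_le_m. Qed.

Lemma mem_Mset_set_bid q b i y : (i \in Mset q (set_bid b i y)) = (q <= y).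
Proof. by rewrite inE /set_bid eqxx. Qed.

Lemma Mset_set_bid_eligible q b i x y :
  q <= x -> q <= y -> Mset q (set_bid b i x) = Mset q (set_bid b i y).
Proof.
by move=> qx qy; apply/setP => j; rewrite !inE /set_bid; case: eqP; rewrite ?qx ?qy.
Qed.

End RandomMaximal.

Section MyopicBidders.
Variables (R : realFieldType) (n m : nat) (alpha delta : R).
Local Notation M := (TWDPP n m alpha delta).
Implicit Types (q v x : R) (b : bids R n).

Lemma bidder_utility_ineligible q b i x v :
  x < q -> bidder_utility M q (set_bid b i x) i v = 0.
Proof.
move=> xq; apply: uexp_eq0 => B /RM_alloc_sub /subsetP B_sub.
by case: ifP => // /B_sub; rewrite mem_Mset_set_bid leNgt xq.
Qed.

Lemma TWDPP_expost_IC : expost_IC_myopic_bidders M.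
Proof.
move=> q _ b i v x _.
have [vq | qv] := ltP v q.
  by rewrite [X in _ <= X]bidder_utility_ineligible // bidder_utility_le0 ?ltW.
have [xq | qx] := ltP x q.
  by rewrite bidder_utility_ineligible // bidder_utility_ge0.
by rewrite /bidder_utility /= /RM_alloc (Mset_set_bid_eligible b i qx qv).
Qed.

End MyopicBidders.

Section MyopicMiner.
Variables (R : realFieldType) (n m : nat) (alpha delta : R).
Local Notation M := (TWDPP n m alpha delta).

Lemma miner_utility_TWDPP q (b : bids R n) :
  miner_utility_rule M q b = q * (minn m #|Mset q b|)%:R.
Proof.
apply: uexp_cst; first exact: RM_alloc_neq0.
by move=> B /card_RM_alloc ->.
Qed.

Lemma TWDPP_DSIC_miner : DSIC_myopic_miner m M.
Proof.
move=> q q_gt0 b B /feasible_block_card B_le.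
by rewrite miner_utility_TWDPP ler_pM2l // ler_nat.
Qed.

End MyopicMiner.

Theorem mainTheorem7 (R : realFieldType) (n m : nat) (alpha delta : R) :
  (0 < m)%N -> 0 < alpha -> alpha < 1 -> 0 < delta ->
  expost_IC_myopic_bidders (TWDPP n m alpha delta) /\
  DSIC_myopic_miner m (TWDPP n m alpha delta).
Proof.
by move=> _ _ _ _; split; [exact: TWDPP_expost_IC | exact: TWDPP_DSIC_miner].
Qed.
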